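(* Let $\lambda>0$. Consider $\mathcal{UNB}(r,p)$ distributions with $r\to\infty$ and $p=p(r)\in(0,1)$ such that $P:=q/p\to0$ and $rP\to\lambda$, where $q=1-p$. Then for each fixed $x\in\{0,1,2,\dots\}$ the $\mathcal{UNB}(r,p)$ probability of $x$ converges to $$\frac{\lambda^{x}e^{-\lambda}}{(x+1)!}\,{}_1F_1(1;x+2;\lambda),$$ which is the probability mass function of the uniform-Poisson distribution $\mathcal{UP}(\lambda)$.
   Context: $\mathcal{UNB}(r,p)$ ($r>0$, $0<p<1$) is the law of $X$ where $N$ is negative binomial with $P(N=n)=\binom{r+n-1}{n}p^rq^n$, $n\ge0$, and $X\mid N=n$ is uniform on $\{0,1,\dots,n\}$; its pmf is $\frac{q^xp^r}{1+x}\binom{r+x-1}{x}{}_2F_1(1,r+x;2+x;q)$, with $\binom{r+x-1}{x}=\frac{\Gamma(r+x)}{x!\Gamma(r)}$ and ${}_2F_1(a,b;c;z)=\sum_{n\ge0}\frac{(a)_n(b)_n}{(c)_n}\frac{z^n}{n!}$. The confluent hypergeometric function is ${}_1F_1(a;c;z)=\sum_{n\ge0}\frac{(a)_n}{(c)_n}\frac{z^n}{n!}$; here $(s)_n=s(s+1)\cdots(s+n-1)$, $(s)_0=1$. The uniform-Poisson law $\mathcal{UP}(\lambda)$ is that of $X$ where $N\sim$ Poisson$(\lambda)$ and $X\mid N=n$ is uniform on $\{0,\dots,n\}$. *)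

From Stdlib Require Import Reals.
From Coquelicot Require Import Coquelicot.
Open Scope R_scope.

Fixpoint poch (s : R) (n : nat) : R :=
  match n with
  | O => 1
  | S k => poch s k * (s + INR k)
  end.

(* Generalized binomial coefficient binom(r+x-1, x) = Gamma(r+x)/(x! Gamma(r))
   = (r)_x / x!  (for r > 0). *)
Definition gbinom (r : R) (x : nat) : R := poch r x / INR (Stdlib.Arith.Factorial.fact x).

Definition hyp2F1 (a b c z : R) : R :=
  Series (fun n => poch a n * poch b n / poch c n * z ^ n / INR (Stdlib.Arith.Factorial.fact n)).

Definition hyp1F1 (a c z : R) : R :=
  Series (fun n => poch a n / poch c n * z ^ n / INR (Stdlib.Arith.Factorial.fact n)).

Definition unb_pmf (r p : R) (x : nat) : R :=
  let q := 1 - p in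
  q ^ x * Rpower p r / (1 + INR x) * gbinom r x
    * hyp2F1 1 (r + INR x) (2 + INR x) q.

(* pmf of the uniform-Poisson law UP(lambda) at x, by definition of the mixture:
   P(X = x) = sum_{n >= x} P(N = n) * 1/(n+1), N ~ Poisson(lambda). *)
Definition up_pmf (lam : R) (x : nat) : R :=
  Series (fun n => if Nat.leb x n
                   then exp (- lam) * lam ^ n / INR (Stdlib.Arith.Factorial.fact n) / (INR n + 1)
                   else 0).

From Stdlib Require Import Reals Factorial Lia Lra.
From Coquelicot Require Import Coquelicot.
Open Scope R_scope.

(* The UNB probability of x factors as
     [q^x (r)_x / x!] * p^r * 1/(x+1) * 2F1(1, r+x; x+2; q).
   Since q = P p and p = 1/(1+P), the hypotheses give q -> 0 and r q -> lam, hence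
   q^x (r)_x -> lam^x, and squeezing r ln p between -r P and -r q gives p^r -> exp(-lam).
   The n-th term q^n (r+x)_n / (x+2)_n of the 2F1 series tends to lam^n / (x+2)_n, the
   n-th term of 1F1(1; x+2; lam); as soon as q <= 1/2 and q (r+x) <= A it is dominated by
   the term (2A)_n 2^-n / n! of a convergent binomial series, so Tannery's theorem lets the
   limit pass under the sum.  Finally, shifting the summation index by x turns
   lam^x exp(-lam) / (x+1)! * 1F1(1; x+2; lam) into the mixture sum defining UP(lam). *)

Lemma poch_1 n : poch 1 n = INR (fact n).
Proof.
  induction n as [|n IH]; simpl poch; [reflexivity|].
  rewrite IH, fact_simpl, mult_INR, S_INR. ring.
Qed.

Lemma poch_gt0 s n : 0 < s -> 0 < poch s n.
Proof.
  intros Hs. induction n as [|n IH]; simpl poch; [lra|].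
  apply Rmult_lt_0_compat; [exact IH|]. pose proof (pos_INR n). lra.
Qed.

Lemma fact_mul_poch x n :
  INR (fact (x + 1)) * poch (INR x + 2) n = INR (fact (x + n)) * (INR (x + n) + 1).
Proof.
  induction n as [|n IH].
  - rewrite Nat.add_0_r, Nat.add_1_r, fact_simpl, mult_INR, S_INR. simpl poch. ring.
  - simpl poch. rewrite <- Rmult_assoc, IH, Nat.add_succ_r, fact_simpl, mult_INR, S_INR, plus_INR.
    ring.
Qed.

Lemma up_pmf_hyp1F1 lam x :
  lam ^ x * exp (- lam) / INR (fact (x + 1)) * hyp1F1 1 (INR x + 2) lam = up_pmf lam x.
Proof.
  unfold hyp1F1, up_pmf.
  rewrite <- Series_scal_l. symmetry.
  rewrite (Series_incr_n_aux _ x).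
  2:{ intros k Hk. destruct (Nat.leb_spec x k); [lia|reflexivity]. }
  apply Series_ext. intros n.
  destruct (Nat.leb_spec x (x + n)); [|lia].
  pose proof (fact_mul_poch x n) as Hfact.
  pose proof (INR_fact_lt_0 (x + 1)). pose proof (INR_fact_lt_0 n).
  pose proof (INR_fact_lt_0 (x + n)). pose proof (pos_INR (x + n)).
  assert (0 < poch (INR x + 2) n) by (apply poch_gt0; pose proof (pos_INR x); lra).
  rewrite poch_1, pow_add.
  field_simplify; [|lra..].
  rewrite Hfact. f_equal. ring.
Qed.

Lemma ex_series_poch_pow a z : 0 < a -> 0 < z < 1 ->
  ex_series (fun n => poch a n * z ^ n / INR (fact n)).
Proof.
  intros Ha Hz.
  set (u n := poch a n * z ^ n / INR (fact n)).
  assert (Hu : forall n, 0 < u n).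
  { intros n. unfold u. apply Rdiv_lt_0_compat; [|apply INR_fact_lt_0].
    apply Rmult_lt_0_compat; [apply poch_gt0, Ha|apply pow_lt; lra]. }
  apply ex_series_Rabs, (ex_series_DAlembert _ z); [lra|intros n; apply Rgt_not_eq, Hu|].
  apply (is_lim_seq_ext (fun n => z + (a - 1) * z * / (INR n + 1))).
  { intros n. pose proof (pos_INR n). pose proof (INR_fact_lt_0 n).
    assert (0 < poch a n) by now apply poch_gt0.
    rewrite Rabs_pos_eq by (apply Rlt_le, Rdiv_lt_0_compat; apply Hu).
    unfold u. simpl poch. rewrite fact_simpl, mult_INR, S_INR. simpl pow.
    field. repeat split; try lra; apply Rgt_not_eq, pow_lt; lra. }
  replace (Finite z) with (Finite (z + (a - 1) * z * 0)) by (f_equal; ring).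
  apply is_lim_seq_plus'; [apply is_lim_seq_const|].
  apply is_lim_seq_mult'; [apply is_lim_seq_const|].
  apply (is_lim_seq_inv _ p_infty); [|discriminate].
  eapply is_lim_seq_plus; [apply is_lim_seq_INR|apply is_lim_seq_const|reflexivity].
Qed.

Lemma pow_poch_div_poch_le_binomial q s c A n :
  0 <= q <= 1/2 -> 0 <= s -> q * s <= A -> 0 <= c ->
  0 <= q ^ n * poch s n / poch (2 + c) n <= poch (2 * A) n * (1/2) ^ n / INR (fact n).
Proof.
  intros Hq Hs HA Hc. induction n as [|n IH]; [simpl; lra|].
  simpl pow. simpl poch.
  pose proof (pos_INR n). pose proof (INR_fact_lt_0 n).
  assert (0 < poch (2 + c) n) by (apply poch_gt0; lra).
  rewrite fact_simpl, mult_INR, S_INR.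
  replace (q * q ^ n * (poch s n * (s + INR n)) / (poch (2 + c) n * (2 + c + INR n)))
    with ((q ^ n * poch s n / poch (2 + c) n) * (q * (s + INR n) / (2 + c + INR n)))
    by (field; lra).
  replace (poch (2 * A) n * (2 * A + INR n) * (1 / 2 * (1 / 2) ^ n) / ((INR n + 1) * INR (fact n)))
    with ((poch (2 * A) n * (1 / 2) ^ n / INR (fact n)) * ((A + INR n / 2) / (INR n + 1)))
    by (field; lra).
  assert (0 <= q * (s + INR n) / (2 + c + INR n) <= (A + INR n / 2) / (INR n + 1)).
  { split.
    - apply Rdiv_le_0_compat; [apply Rmult_le_pos|]; lra.
    - unfold Rdiv. apply Rmult_le_compat; try nra.
      + apply Rlt_le, Rinv_0_lt_compat. lra.
      + apply Rinv_le_contravar; lra. }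
  split; [apply Rmult_le_pos|apply Rmult_le_compat]; lra.
Qed.

Lemma Rabs_Series_le (a b : nat -> R) :
  (forall n, Rabs (a n) <= b n) -> ex_series b -> Rabs (Series a) <= Series b.
Proof.
  intros Hab Hb.
  assert (Ha : ex_series (fun n => Rabs (a n))).
  { apply (ex_series_le (V := R_CompleteNormedModule) _ b); [|exact Hb].
    intros n. change (Rabs (Rabs (a n)) <= b n). rewrite Rabs_Rabsolu. apply Hab. }
  eapply Rle_trans; [apply (Series_Rabs a Ha)|].
  apply Series_le; [|exact Hb].
  intros n. split; [apply Rabs_pos|apply Hab].
Qed.

Lemma ex_series_tail_lt (a : nat -> R) :
  ex_series a -> forall eps, 0 < eps ->
  exists N, Rabs (Series (fun k => a (S N + k)%nat)) < eps.
Proof.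
  intros Ha eps Heps.
  destruct Ha as [l Hl].
  pose proof (proj1 (is_series_Reals a l) Hl eps Heps) as [N HN].
  exists N.
  assert (Htail : Series (fun k => a (S N + k)%nat) = l - sum_f_R0 a N).
  { rewrite <- (is_series_unique a l Hl), (Series_incr_n a (S N)) by (lia || now exists l).
    simpl pred. ring. }
  rewrite Htail, Rabs_minus_sym.
  specialize (HN N (le_n N)). unfold R_dist in HN.
  exact HN.
Qed.

Section Tannery.

Context {T : Type} {F : (T -> Prop) -> Prop} {FF : ProperFilter' F}.

Lemma filterlim_sum_f_R0 (f : T -> nat -> R) (g : nat -> R) :
  (forall n, filterlim (fun t => f t n) F (locally (g n))) ->
  forall N, filterlim (fun t => sum_f_R0 (f t) N) F (locally (sum_f_R0 g N)).
Proof.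
  intros Hlim N. induction N as [|N IH]; simpl; [apply Hlim|].
  apply (filterlim_comp_2 _ _ Rplus IH (Hlim (S N))).
  exact (filterlim_plus (V := R_NormedModule) (sum_f_R0 g N) (g (S N))).
Qed.

Lemma filterlim_Series (f : T -> nat -> R) (g D : nat -> R) :
  ex_series D ->
  F (fun t => forall n, Rabs (f t n) <= D n) ->
  (forall n, filterlim (fun t => f t n) F (locally (g n))) ->
  filterlim (fun t => Series (f t)) F (locally (Series g)).
Proof.
  intros HD Hdom Hlim.
  assert (Hg : forall n, Rabs (g n) <= D n).
  { intros n. apply Rabs_le_between. split.
    - apply (filterlim_le (fun _ => - D n) (fun t => f t n) (- D n) (g n));
        [|apply filterlim_const|apply Hlim].
      apply (filter_imp _ _ (fun t Ht => proj1 (proj1 (Rabs_le_between _ _) (Ht n))) Hdom).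
    - apply (filterlim_le (fun t => f t n) (fun _ => D n) (g n) (D n));
        [|apply Hlim|apply filterlim_const].
      apply (filter_imp _ _ (fun t Ht => proj2 (proj1 (Rabs_le_between _ _) (Ht n))) Hdom). }
  assert (Hexg : ex_series g) by exact (ex_series_le g D Hg HD).
  apply (filterlim_locally (F := F)). intros [eps Heps]; simpl.
  assert (Heps3 : 0 < eps / 3) by lra.
  destruct (ex_series_tail_lt D HD (eps / 3) Heps3) as [N HN].
  assert (HtailD : ex_series (fun k => D (S N + k)%nat)) by now apply ex_series_incr_n.
  pose proof (proj1 (filterlim_locally _ _) (filterlim_sum_f_R0 f g Hlim N)
    (mkposreal _ Heps3)) as Hnear.
  eapply filter_imp; [|exact (filter_and _ _ Hdom Hnear)].
  intros t [Ht Hclose].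
  change (Rabs (Series (f t) - Series g) < eps).
  change (Rabs (sum_f_R0 (f t) N - sum_f_R0 g N) < eps / 3) in Hclose.
  assert (Hexf : ex_series (f t)) by exact (ex_series_le (f t) D Ht HD).
  rewrite (Series_incr_n (f t) (S N)), (Series_incr_n g (S N)) by (lia || assumption).
  simpl pred.
  assert (Hf : Rabs (Series (fun k => f t (S N + k)%nat)) <= Series (fun k => D (S N + k)%nat))
    by (apply Rabs_Series_le; [intros k; apply Ht|exact HtailD]).
  assert (Hg' : Rabs (Series (fun k => g (S N + k)%nat)) <= Series (fun k => D (S N + k)%nat))
    by (apply Rabs_Series_le; [intros k; apply Hg|exact HtailD]).
  apply Rabs_lt_between in HN. apply Rabs_lt_between in Hclose.
  apply Rabs_le_between in Hf. apply Rabs_le_between in Hg'.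
  apply Rabs_lt_between. lra.
Qed.

End Tannery.

Lemma is_lim_Series (f : R -> nat -> R) (g D : nat -> R) (x : Rbar) :
  ex_series D ->
  Rbar_locally' x (fun r => forall n, Rabs (f r n) <= D n) ->
  (forall n, is_lim (fun r => f r n) x (g n)) ->
  is_lim (fun r => Series (f r)) x (Series g).
Proof. apply filterlim_Series. Qed.

Lemma ln_le_sub_1 y : 0 < y -> ln y <= y - 1.
Proof.
  intros Hy. rewrite <- (ln_exp (y - 1)).
  apply ln_le; [exact Hy|]. pose proof (exp_ineq1_le (y - 1)). lra.
Qed.

Lemma is_lim_mult' (f g : R -> R) (x : Rbar) (a b : R) :
  is_lim f x a -> is_lim g x b -> is_lim (fun y => f y * g y) x (a * b).
Proof. intros Hf Hg. exact (is_lim_mult f g x a b Hf Hg I). Qed.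

Lemma is_lim_eventually_near (f : R -> R) (x : Rbar) (l eps : R) :
  is_lim f x l -> 0 < eps -> Rbar_locally' x (fun y => l - eps < f y < l + eps).
Proof.
  intros Hf Heps.
  apply (filter_imp (fun y => Rabs (f y - l) < eps)).
  - intros y Hy. apply Rabs_lt_between'. exact Hy.
  - exact (proj2 (is_lim_spec f x l) Hf (mkposreal eps Heps)).
Qed.

Section Limits.

Variables (lam : R) (p : R -> R).
Hypothesis hp : Rbar_locally p_infty (fun r => 0 < p r < 1).
Hypothesis hP0 : is_lim (fun r => (1 - p r) / p r) p_infty 0.
Hypothesis hrP : is_lim (fun r => r * ((1 - p r) / p r)) p_infty lam.

Lemma is_lim_p : is_lim p p_infty 1.
Proof.
  apply (is_lim_ext_loc (fun r => / (1 + (1 - p r) / p r))).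
  - eapply filter_imp; [|exact hp]. intros r Hr. field. lra.
  - replace (Finite 1) with (Rbar_inv (1 + 0)) by (simpl; f_equal; field).
    apply is_lim_inv; [|simpl; injection; lra].
    apply is_lim_plus'; [apply is_lim_const|exact hP0].
Qed.

Lemma is_lim_q : is_lim (fun r => 1 - p r) p_infty 0.
Proof.
  apply (is_lim_ext_loc (fun r => (1 - p r) / p r * p r)).
  - eapply filter_imp; [|exact hp]. intros r Hr. field. lra.
  - replace 0 with (0 * 1) by ring. exact (is_lim_mult' _ _ _ _ _ hP0 is_lim_p).
Qed.

Lemma is_lim_rq : is_lim (fun r => r * (1 - p r)) p_infty lam.
Proof.
  apply (is_lim_ext_loc (fun r => r * ((1 - p r) / p r) * p r)).
  - eapply filter_imp; [|exact hp]. intros r Hr. field. lra.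
  - rewrite <- (Rmult_1_r lam). exact (is_lim_mult' _ _ _ _ _ hrP is_lim_p).
Qed.

Lemma is_lim_pow_q_poch c k :
  is_lim (fun r => (1 - p r) ^ k * poch (r + c) k) p_infty (lam ^ k).
Proof.
  induction k as [|k IH].
  - apply (is_lim_ext_loc (fun _ => 1)); [|apply is_lim_const].
    exists 0. intros r _. simpl. ring.
  - apply (is_lim_ext_loc (fun r => (1 - p r) ^ k * poch (r + c) k
                                    * (r * (1 - p r) + (c + INR k) * (1 - p r)))).
    { exists 0. intros r _. simpl. ring. }
    replace (lam ^ S k) with (lam ^ k * (lam + (c + INR k) * 0)) by (simpl; ring).
    apply is_lim_mult'; [exact IH|].
    apply is_lim_plus'; [exact is_lim_rq|].
    apply is_lim_mult'; [apply is_lim_const|exact is_lim_q].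
Qed.

Lemma is_lim_Rpower_p : is_lim (fun r => Rpower (p r) r) p_infty (exp (- lam)).
Proof.
  assert (Hlog : is_lim (fun r => r * ln (p r)) p_infty (- lam)).
  { assert (Hpos : Rbar_locally p_infty (fun r => 0 < r)) by now exists 0.
    apply (is_lim_le_le_loc (fun r => - (r * ((1 - p r) / p r))) (fun r => - (r * (1 - p r)))).
    - eapply filter_imp; [|exact (filter_and _ _ hp Hpos)].
      intros r [Hpr Hr].
      pose proof (ln_le_sub_1 (p r) (proj1 Hpr)) as Hup.
      pose proof (ln_le_sub_1 (/ p r) (Rinv_0_lt_compat _ (proj1 Hpr))) as Hlow.
      rewrite ln_Rinv in Hlow by lra.
      replace (/ p r - 1) with ((1 - p r) / p r) in Hlow by (field; lra).
      split; apply Ropp_le_cancel; rewrite Ropp_involutive, Ropp_mult_distr_r;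
        apply Rmult_le_compat_l; lra.
    - exact (is_lim_opp _ _ lam hrP).
    - exact (is_lim_opp _ _ lam is_lim_rq). }
  apply (is_lim_ext_loc (fun r => exp (r * ln (p r)))); [now exists 0|].
  exact (is_lim_comp_continuous _ exp p_infty (- lam) Hlog (continuous_exp (- lam))).
Qed.

Lemma is_lim_hyp2F1 x :
  is_lim (fun r => hyp2F1 1 (r + INR x) (2 + INR x) (1 - p r)) p_infty
    (hyp1F1 1 (INR x + 2) lam).
Proof.
  pose proof (pos_INR x) as Hx.
  assert (Hpoch : forall n, 0 < poch (2 + INR x) n) by (intros n; apply poch_gt0; lra).
  assert (Hterm : forall r n,
    poch 1 n * poch (r + INR x) n / poch (2 + INR x) n * (1 - p r) ^ n / INR (fact n)
    = (1 - p r) ^ n * poch (r + INR x) n / poch (2 + INR x) n).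
  { intros r n. rewrite poch_1. pose proof (INR_fact_lt_0 n). specialize (Hpoch n).
    field. lra. }
  unfold hyp2F1, hyp1F1.
  apply (is_lim_Series _ _ (fun n => poch (2 * (Rabs lam + 1)) n * (1/2) ^ n / INR (fact n))).
  - apply ex_series_poch_pow; [pose proof (Rabs_pos lam)|]; lra.
  - pose proof (is_lim_eventually_near _ _ _ (1/2) is_lim_q ltac:(lra)) as Hq.
    pose proof (is_lim_eventually_near _ _ _ 1 (is_lim_pow_q_poch (INR x) 1) ltac:(lra)) as Hqs.
    assert (Hpos : Rbar_locally p_infty (fun r => 0 < r)) by now exists 0.
    pose proof (filter_and _ _ hp (filter_and _ _ Hq (filter_and _ _ Hqs Hpos))) as Hall.
    eapply filter_imp; [|exact Hall]. simpl.
    intros r (Hpr & Hqr & Hqsr & Hr) n.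
    assert (Hqs' : (1 - p r) * (r + INR x) <= Rabs lam + 1).
    { pose proof (Rle_abs lam). simpl in Hqsr. lra. }
    assert (Hbound := pow_poch_div_poch_le_binomial (1 - p r) (r + INR x) (INR x) (Rabs lam + 1) n).
    rewrite Hterm, Rabs_pos_eq; apply Hbound; lra.
  - intros n.
    apply (is_lim_ext_loc (fun r => (1 - p r) ^ n * poch (r + INR x) n / poch (2 + INR x) n));
      [exists 0; intros r _; symmetry; apply Hterm|].
    replace (poch 1 n / poch (INR x + 2) n * lam ^ n / INR (fact n))
      with (lam ^ n / poch (2 + INR x) n).
    + apply is_lim_mult'; [apply is_lim_pow_q_poch|apply is_lim_const].
    + rewrite poch_1, (Rplus_comm (INR x) 2). pose proof (INR_fact_lt_0 n). specialize (Hpoch n).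
      field. lra.
Qed.

End Limits.

Theorem mainTheorem7 (lam : R) (hlam : 0 < lam) (p : R -> R)
  (hp : Rbar_locally p_infty (fun r => 0 < p r < 1))
  (hP0 : is_lim (fun r => (1 - p r) / p r) p_infty 0)
  (hrP : is_lim (fun r => r * ((1 - p r) / p r)) p_infty lam)
  (x : nat) :
  is_lim (fun r => unb_pmf r (p r) x) p_infty
    (lam ^ x * exp (- lam) / INR (Stdlib.Arith.Factorial.fact (x + 1)) * hyp1F1 1 (INR x + 2) lam)
  /\ lam ^ x * exp (- lam) / INR (Stdlib.Arith.Factorial.fact (x + 1)) * hyp1F1 1 (INR x + 2) lam
     = up_pmf lam x.
Proof.
  split; [|apply up_pmf_hyp1F1].
  apply (is_lim_ext_loc (fun r => (1 - p r) ^ x * poch (r + 0) x * Rpower (p r) r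
           * / INR (fact (x + 1)) * hyp2F1 1 (r + INR x) (2 + INR x) (1 - p r))).
  { exists 0. intros r _. unfold unb_pmf, gbinom.
    rewrite Rplus_0_r, Nat.add_1_r, fact_simpl, mult_INR, S_INR.
    pose proof (INR_fact_lt_0 x). pose proof (pos_INR x). field. lra. }
  apply is_lim_mult'; [|apply is_lim_hyp2F1; assumption].
  apply is_lim_mult'; [|apply is_lim_const].
  apply is_lim_mult'; [apply is_lim_pow_q_poch | apply is_lim_Rpower_p]; assumption.
Qed.
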